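(* Let $I=(I_1,\dots,I_d)\in \mathcal I_d$ and $r,s\in [5]$ with $r\neq s$. Assume that the letter $r$ appears exactly once in each of $I_1,\ldots,I_c$ and does not appear in $I_{c+1},\ldots,I_{d}$. Then, for the adjoint action of $L_0$ on $U_-$, $x_s\partial _r. \omega_I=\sum_{b=1}^c \omega_{I^{b,s,r}}$, where $I^{b,s,r}$ is obtained from $I$ by replacing the letter $r$ in $I_b$ by $s$.
   Context: $L=E(5,10)$: even part the divergence-free formal vector fields in $x_1,\dots,x_5$, odd part the closed formal 2-forms; $d_{ij}=dx_i\wedge dx_j$ ($d_{ji}=-d_{ij}$, $d_{ii}=0$), and $[f d_{ij},g d_{kl}]=\varepsilon_{ijkl}fg\partial_{t_{ijkl}}$, where if $|\{i,j,k,l\}|=4$, $t_{ijkl}$ is the fifth element of $[5]$ and $\varepsilon_{ijkl}$ the sign of the permutation $(i,j,k,l,t_{ijkl})$, otherwise $\varepsilon_{ijkl}=0$. $L_0\cong\mathfrak{sl}_5$ is spanned by $x_i\partial_j$ ($i\ne j$) and $x_i\partial_i-x_j\partial_j$, and acts on $U_-=U(L_-)$, $L_-=\langle\partial_i\rangle\oplus\langle d_{ij}\rangle$, by the adjoint action $x.u=xu-ux$ (computed in $U(L)$). $\mathcal I_d$ is the set of $d$-tuples $I=(I_1,\dots,I_d)$ of ordered pairs $I_l=(i_l,j_l)\in[5]^2$; $d_I=d_{i_1j_1}\cdots d_{i_dj_d}$. For $k\neq l$ in $[d]$, $D_{\{k,l\}}(I)=\tfrac12(-1)^{k+l}\varepsilon_{i_kj_ki_lj_l}\partial_{t_{i_kj_ki_lj_l}}$.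 $\mathrm{SIF}_d$ is the set of sets $S$ of pairwise disjoint 2-element subsets of $[d]$; two disjoint pairs $\{k,l\},\{h,m\}$ cross if exactly one of $k,l$ is strictly between $h$ and $m$; $c(S)$ is the number of crossing pairs in $S$. $D_S(I)=\prod_{P\in S}D_P(I)$ ($D_\emptyset=1$), $C_S(I)$ is $I$ with all $I_j$, $j\in\bigcup S$, deleted, and $\omega_I=\sum_{S\in \mathrm{SIF}_d}(-1)^{c(S)}D_S(I)\,d_{C_S(I)}\in U_-$. *)

From HB Require Import structures.
From mathcomp Require Import all_boot all_order all_algebra.
Set Implicit Arguments. Unset Strict Implicit. Unset Printing Implicit Defensive.
Import Order.TTheory GRing.Theory Num.Theory.

(* Letters [5] = 'I_5 ; positions [d] = {0,...,d-1} (0-based).         *)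

Definition letter := 'I_5.
Definition lpair := (letter * letter)%type.
Definition p0 : lpair := (ord0, ord0).

Definition inversions (w : seq letter) : nat :=
  let v := map val w in
  size [seq ab <- allpairs pair (iota 0 (size v)) (iota 0 (size v))
       | (ab.1 < ab.2) && (nth 0 v ab.2 < nth 0 v ab.1)].

(* t_{ijkl}: the fifth element of [5] (meaningful when i,j,k,l distinct) *)
Definition tfifth (i j k l : letter) : letter :=
  odflt ord0 [pick x : letter | x \notin [:: i; j; k; l]].

Definition eps (i j k l : letter) : rat :=
  if uniq [:: i; j; k; l]
  then ((-1) ^+ (inversions [:: i; j; k; l; tfifth i j k l]))%R
  else 0%R.

(* The enveloping algebra U(g) of the Lie superalgebra                 *)
(*   g = span(x_s d_r) (+) L_-  (a subalgebra of L = E(5,10)),         *)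
(* presented as the tensor algebra on generators modulo the usual      *)
(* relations  a b - (-1)^{|a||b|} b a = [a,b].  Base field: Q.          *)

Inductive gen :=
| GD of letter            (* \partial_i  (even, degree -2)          *)
| GF of letter & letter   (* d_{ij} = dx_i /\ dx_j (odd, degree -1) *)
| GX.                     (* x_s \partial_r (even, in L_0)           *)

Inductive term :=
| tgen of gen
| tc of rat
| tadd of term & term
| tmul of term & term.

Definition tneg (a : term) := tmul (tc (-1)%R) a.
Definition tsub (a b : term) := tadd a (tneg b).
Definition tsum (s : seq term) := foldr tadd (tc 0%R) s.
Definition tprod (s : seq term) := foldr tmul (tc 1%R) s.

Definition Dp (i : letter) := tgen (GD i).
Definition Fd (i j : letter) := tgen (GF i j).
Definition Xg := tgen GX.

Definition kd (a b : letter) : rat := ((a == b)%:R)%R.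

(* Defining relations of U(g), with X = x_s \partial_r:
   [\partial_i,\partial_j] = 0, [\partial_i, d_kl] = 0,
   [d_ij, d_kl] = d_ij d_kl + d_kl d_ij = eps_{ijkl} \partial_{t_{ijkl}},
   d_ji = - d_ij,
   [x_s\partial_r, \partial_i] = - delta_{is} \partial_r,
   [x_s\partial_r, d_ij] = L_{x_s \partial_r}(dx_i/\dx_j)
                         = delta_{ri} d_sj + delta_{rj} d_is
   (divergence of x_s\partial_r is 0 since r <> s). *)
Inductive urel (s r : letter) : term -> term -> Prop :=
| rel_DD i j : urel s r (tmul (Dp i) (Dp j)) (tmul (Dp j) (Dp i))
| rel_DF i k l : urel s r (tmul (Dp i) (Fd k l)) (tmul (Fd k l) (Dp i))
| rel_FF i j k l :
    urel s r (tadd (tmul (Fd i j) (Fd k l)) (tmul (Fd k l) (Fd i j)))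
             (tmul (tc (eps i j k l)) (Dp (tfifth i j k l)))
| rel_Fanti i j : urel s r (Fd j i) (tneg (Fd i j))
| rel_XD i : urel s r (tsub (tmul Xg (Dp i)) (tmul (Dp i) Xg))
                      (tmul (tc (- kd i s)%R) (Dp r))
| rel_XF i j : urel s r (tsub (tmul Xg (Fd i j)) (tmul (Fd i j) Xg))
                        (tadd (tmul (tc (kd r i)) (Fd s j))
                              (tmul (tc (kd r j)) (Fd i s))).

Inductive ueq (s r : letter) : term -> term -> Prop :=
| ueq_refl a : ueq s r a a
| ueq_sym a b : ueq s r a b -> ueq s r b a
| ueq_trans a b c : ueq s r a b -> ueq s r b c -> ueq s r a c
| ueq_add a a' b b' : ueq s r a a' -> ueq s r b b' ->
    ueq s r (tadd a b) (tadd a' b')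
| ueq_mul a a' b b' : ueq s r a a' -> ueq s r b b' ->
    ueq s r (tmul a b) (tmul a' b')
| ueq_addA a b c : ueq s r (tadd a (tadd b c)) (tadd (tadd a b) c)
| ueq_addC a b : ueq s r (tadd a b) (tadd b a)
| ueq_add0 a : ueq s r (tadd (tc 0%R) a) a
| ueq_addN a : ueq s r (tadd a (tneg a)) (tc 0%R)
| ueq_mulA a b c : ueq s r (tmul a (tmul b c)) (tmul (tmul a b) c)
| ueq_mul1l a : ueq s r (tmul (tc 1%R) a) a
| ueq_mul1r a : ueq s r (tmul a (tc 1%R)) a
| ueq_mulDl a b c : ueq s r (tmul (tadd a b) c) (tadd (tmul a c) (tmul b c))
| ueq_mulDr a b c : ueq s r (tmul a (tadd b c)) (tadd (tmul a b) (tmul a c))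
| ueq_cadd x y : ueq s r (tadd (tc x) (tc y)) (tc (x + y)%R)
| ueq_cmul x y : ueq s r (tmul (tc x) (tc y)) (tc (x * y)%R)
| ueq_ccomm x a : ueq s r (tmul (tc x) a) (tmul a (tc x))
| ueq_rel a b : urel s r a b -> ueq s r a b.

(* the two elements of a 2-subset P of [d], as naturals (lo < hi) *)
Definition plo d (P : {set 'I_d}) : nat := head 0 [seq val x | x <- enum P].
Definition phi d (P : {set 'I_d}) : nat := last 0 [seq val x | x <- enum P].

Definition SIF d : {set {set {set 'I_d}}} :=
  [set S : {set {set 'I_d}} |
     [forall P in S, #|P| == 2] &&
     [forall P in S, forall Q in S, (P != Q) ==> [disjoint P & Q]]].

Definition strictly_between (x h m : nat) := (minn h m < x) && (x < maxn h m).

Definition crossing d (P Q : {set 'I_d}) : bool :=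
  strictly_between (plo P) (plo Q) (phi Q) (+)
  strictly_between (phi P) (plo Q) (phi Q).

Definition ncross d (S : {set {set 'I_d}}) : nat :=
  #|[set PQ in setX S S | (plo PQ.1 < plo PQ.2) && crossing PQ.1 PQ.2]|.

Definition Dpair (I : seq lpair) (k l : nat) : term :=
  let a := nth p0 I k in let b := nth p0 I l in
  tmul (tc ((1/2) * (-1) ^+ (k + l) * eps a.1 a.2 b.1 b.2)%R)
       (Dp (tfifth a.1 a.2 b.1 b.2)).

Definition covered d (S : {set {set 'I_d}}) (j : nat) : bool :=
  [exists P in S, [exists x in P, val x == j]].

Definition CS (I : seq lpair) (S : {set {set 'I_(size I)}}) : seq lpair :=
  [seq nth p0 I j | j <- iota 0 (size I) & ~~ covered S j].

Definition dword (I : seq lpair) : term := tprod [seq Fd p.1 p.2 | p <- I].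

Definition omega (I : seq lpair) : term :=
  tsum [seq tmul (tc ((-1) ^+ ncross SS)%R)
              (tmul (tprod [seq Dpair I (plo P) (phi P) | P <- enum SS])
                    (dword (CS SS)))
       | SS <- enum (SIF (size I))].

(* I^{b,s,r}: replace the letter r in I_b by s (b 0-based) *)
Definition repl_letter (s r : letter) (p : lpair) : lpair :=
  (if p.1 == r then s else p.1, if p.2 == r then s else p.2).
Definition Ibsr (I : seq lpair) (b : nat) (s r : letter) : seq lpair :=
  set_nth p0 I b (repl_letter s r (nth p0 I b)).

From HB Require Import structures.
From mathcomp Require Import all_boot all_order all_algebra.
From mathcomp Require Import boolp ring.
Set Implicit Arguments. Unset Strict Implicit. Unset Printing Implicit Defensive.
Import GRing.Theory.

(* Write X = x_s \partial_r.  Then ad X = [X, -] is a derivation of U(g) vanishing on scalars,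
     ad X (d_ij) = delta_ri d_sj + delta_rj d_is,   ad X (\partial_i) = - delta_is \partial_r,
   so ad X replaces r by s in a pair containing r exactly once and kills a pair free of r.
   Every summand of omega_I is a scalar times a product of factors D_{kl}(I) and d_{I_j} whose
   position sets {k, l} and {j} partition [d]; by the Leibniz rule, ad X of the product is the
   sum over the positions b of the same product computed from I^{b,s,r}.  For a factor
   D_{kl}(I) this is the identity, checked by evaluation over all letters,
     - delta_{s t} eps_{I_k I_l} \partial_r
       = [r in I_k] eps_{I'_k I_l} \partial_{t'} + [r in I_l] eps_{I_k I'_l} \partial_{t''},
   where primes mark the substitution r -> s and t, t', t'' are the complementary letters. *)

Local Open Scope ring_scope.
Local Open Scope quotient_scope.

Section Derivation.
Variables (R : pzRingType) (d : R -> R).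
Hypothesis dM : forall p q, d (p * q) = d p * q + p * d q.

Lemma der1 : d 1 = 0.
Proof. by have := dM 1 1; rewrite !mulr1 mul1r -{1}[d 1]addr0 => /addrI <-. Qed.

Lemma der_prod_disjoint (A B : eqType) (f0 : A -> R) (f : B -> A -> R)
    (supp : A -> seq B) (L : seq B) (xs : seq A) :
  (forall b, count (fun x => b \in supp x) xs <= 1)%N ->
  {in xs, forall x, d (f0 x) = \sum_(b <- L | b \in supp x) f b x} ->
  {in xs, forall x b, b \notin supp x -> f b x = f0 x} ->
  d (\prod_(x <- xs) f0 x) =
    \sum_(b <- L | has (fun x => b \in supp x) xs) \prod_(x <- xs) f b x.
Proof.
elim: xs => [|x xs IH] supp1 df0 f_out; first by rewrite big_nil der1 big_pred0.
have sub y : y \in xs -> y \in x :: xs by move=> yxs; rewrite in_cons yxs orbT.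
have notin_xs b : b \in supp x -> ~~ has (fun y => b \in supp y) xs.
  by move=> bx; have := supp1 b; rewrite /= bx add1n ltnS has_count -leqNgt.
have {}IH := IH (fun b => leq_trans (leq_addl _ _) (supp1 b))
  (fun y yxs => df0 y (sub y yxs)) (fun y yxs => f_out y (sub y yxs)).
rewrite big_cons dM df0 ?mem_head // IH mulr_suml mulr_sumr.
rewrite [RHS](bigID (fun b => b \in supp x)) /=; congr (_ + _).
  apply: eq_big => [b | b bx]; first by case: (b \in supp x); rewrite ?andbT ?andbF.
  rewrite big_cons; congr (_ * _); apply: eq_big_seq => y yxs.
  apply/esym/f_out; first exact: sub.
  by apply: contraNN (notin_xs b bx) => byy; apply/hasP; exists y.
apply: eq_big => [b | b hb]; last first.
  by rewrite big_cons f_out ?mem_head ?(contraL (notin_xs b) hb).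
case hb: (has _ xs); last by rewrite orbF andbN.
by rewrite orbT (contraL (notin_xs b) hb).
Qed.

End Derivation.

Section InnerDerivation.
Variables (R : pzRingType) (x : R).

Definition ad (q : R) := x * q - q * x.

Lemma ad_is_zmod_morphism : zmod_morphism ad.
Proof.
move=> p q; rewrite /ad mulrBr mulrBl !opprB addrACA [RHS]addrACA.
by congr (_ + _); rewrite addrC.
Qed.

HB.instance Definition _ := GRing.isZmodMorphism.Build R R ad ad_is_zmod_morphism.

Lemma ad_sum (I : Type) (l : seq I) (P : pred I) (F : I -> R) :
  ad (\sum_(i <- l | P i) F i) = \sum_(i <- l | P i) ad (F i).
Proof. exact: raddf_sum. Qed.

Lemma adM p q : ad (p * q) = ad p * q + p * ad q.
Proof. by rewrite /ad mulrBl mulrBr !mulrA addrA subrK. Qed.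

Lemma ad_comm c : GRing.comm x c -> ad c = 0.
Proof. by rewrite /ad => ->; rewrite subrr. Qed.

Lemma ad_mulr_comm c q : GRing.comm x c -> ad (c * q) = c * ad q.
Proof. by move=> xc; rewrite adM ad_comm // mul0r add0r. Qed.

End InnerDerivation.

(* The identity is checked by evaluation on letters coded as naturals: [tfifth] is defined
   with [pick], which does not reduce by computation on ['I_5]. *)
Definition inversions_nat (v : seq nat) : nat :=
  size [seq ab <- allpairs pair (iota 0 (size v)) (iota 0 (size v))
       | (ab.1 < ab.2)%N && (nth 0 v ab.2 < nth 0 v ab.1)%N].
Definition fifth_nat (i j k l : nat) : nat :=
  head 0 [seq x <- iota 0 5 | x \notin [:: i; j; k; l]].
Definition eps_nat (i j k l : nat) : int :=
  if uniq [:: i; j; k; l]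
  then (-1) ^+ inversions_nat [:: i; j; k; l; fifth_nat i j k l] else 0.
Definition kd_nat (a b : nat) : int := (a == b)%:R.
Definition repl_nat (s r a : nat) : nat := if a == r then s else a.
Definition once_nat (r a b : nat) : int := ((a == r) (+) (b == r))%:R.

Definition eps_shift_at (a1 a2 b1 b2 r s x : nat) : bool :=
  let: (a1', a2') := (repl_nat s r a1, repl_nat s r a2) in
  let: (b1', b2') := (repl_nat s r b1, repl_nat s r b2) in
  kd_nat x r * - (kd_nat s (fifth_nat a1 a2 b1 b2) * eps_nat a1 a2 b1 b2) ==
    once_nat r a1 a2 * (kd_nat x (fifth_nat a1' a2' b1 b2) * eps_nat a1' a2' b1 b2) +
    once_nat r b1 b2 * (kd_nat x (fifth_nat a1 a2 b1' b2') * eps_nat a1 a2 b1' b2').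

Definition all5 (P : pred nat) : bool := all P (iota 0 5).

Lemma all5_letter (P : pred nat) : all5 P -> forall l : letter, P (val l).
Proof. by move=> /allP P5 l; apply: P5; rewrite mem_iota ltn_ord. Qed.

Lemma fifth_nat_spec : all5 (fun i => all5 (fun j => all5 (fun k => all5 (fun l =>
  uniq [:: i; j; k; l] ==>
  (fifth_nat i j k l < 5)%N && (fifth_nat i j k l \notin [:: i; j; k; l]))))).
Proof. by vm_compute. Qed.

Lemma eps_shift_nat : all5 (fun a1 => all5 (fun a2 => all5 (fun b1 => all5 (fun b2 =>
  all5 (fun r => all5 (fun s => (r == s) || all5 (eps_shift_at a1 a2 b1 b2 r s))))))).
Proof. by vm_compute. Qed.

Lemma letter_notin_unique (a b c d x y : letter) : uniq [:: a; b; c; d] ->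
  x \notin [:: a; b; c; d] -> y \notin [:: a; b; c; d] -> x = y.
Proof.
move=> abcd xabcd yabcd; apply/eqP/negPn/negP => xy.
have uniq6 : uniq [:: x, y & [:: a; b; c; d]].
  by rewrite cons_uniq in_cons negb_or xy xabcd cons_uniq yabcd; exact: abcd.
by have := max_card (mem [:: x, y & [:: a; b; c; d]]); rewrite (card_uniqP uniq6) card_ord.
Qed.

Lemma val_tfifth (a b c d : letter) : uniq [:: a; b; c; d] ->
  val (tfifth a b c d) = fifth_nat (val a) (val b) (val c) (val d).
Proof.
move=> abcd; have abcd_val : uniq [:: val a; val b; val c; val d].
  by rewrite -(map_inj_uniq val_inj) in abcd.
have := all5_letter fifth_nat_spec a => /all5_letter/(_ b)/all5_letter/(_ c).
move=> /all5_letter/(_ d); rewrite abcd_val => /andP[lt5 fifth_notin].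
have y_notin : Ordinal lt5 \notin [:: a; b; c; d].
  by apply: contra fifth_notin => /(map_f val).
rewrite /tfifth; case: pickP => [x x_notin | none].
  by rewrite (letter_notin_unique abcd x_notin y_notin).
have y_in : (Ordinal lt5 \notin [:: a; b; c; d]) = false := none (Ordinal lt5).
by rewrite y_in in y_notin.
Qed.

Lemma kdC (a b : letter) : kd a b = kd b a. Proof. by rewrite /kd eq_sym. Qed.

Lemma kd_val (a b : letter) : kd a b = (kd_nat (val a) (val b))%:~R.
Proof. by rewrite /kd /kd_nat val_eqE; case: (a == b). Qed.

Lemma kd_tfifth_eps (x a b c d : letter) :
  kd x (tfifth a b c d) * eps a b c d =
  (kd_nat (val x) (fifth_nat (val a) (val b) (val c) (val d)) *
   eps_nat (val a) (val b) (val c) (val d))%:~R.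
Proof.
rewrite /eps /eps_nat -(map_inj_uniq val_inj) /=.
case: ifP => [abcd | _]; last by rewrite !mulr0.
have -> : inversions [:: a; b; c; d; tfifth a b c d] =
          inversions_nat [:: val a; val b; val c; val d; fifth_nat (val a) (val b) (val c) (val d)].
  by rewrite /inversions [map _ _]/= (val_tfifth abcd).
by rewrite intrM kd_val rmorphXn rmorphN1 (val_tfifth abcd).
Qed.

Definition occurs_once (r : letter) (p : lpair) : bool := (p.1 == r) (+) (p.2 == r).

(* The coefficient of \partial_x in the identity of the header. *)
Lemma eps_shift (a b : lpair) (r s x : letter) : r != s ->
  let a' := repl_letter s r a in let b' := repl_letter s r b in
  kd x r * - (kd s (tfifth a.1 a.2 b.1 b.2) * eps a.1 a.2 b.1 b.2) =
    (occurs_once r a)%:R * (kd x (tfifth a'.1 a'.2 b.1 b.2) * eps a'.1 a'.2 b.1 b.2) +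
    (occurs_once r b)%:R * (kd x (tfifth a.1 a.2 b'.1 b'.2) * eps a.1 a.2 b'.1 b'.2).
Proof.
case: a b => [a1 a2] [b1 b2] rs /=.
have := all5_letter eps_shift_nat a1 => /all5_letter/(_ a2)/all5_letter/(_ b1).
move=> /all5_letter/(_ b2)/all5_letter/(_ r)/all5_letter/(_ s).
rewrite val_eqE (negbTE rs) => /all5_letter/(_ x)/eqP shift.
rewrite kd_val !kd_tfifth_eps !(fun_if val) -intrN -!intrM.
have once_val (p q : letter) :
    ((p == r) (+) (q == r))%:R = (once_nat (val r) (val p) (val q))%:~R :> rat.
  by rewrite /once_nat; case: (_ (+) _).
by rewrite !once_val -!intrM -intrD shift.
Qed.

Lemma big_mem_swap (R : Type) (idx : R) (op : Monoid.com_law idx) (T : eqType)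
    (L s : seq T) (F : T -> R) : uniq L -> uniq s ->
  \big[op/idx]_(b <- L | b \in s) F b = \big[op/idx]_(b <- s | b \in L) F b.
Proof.
move=> uL us; rewrite -[LHS]big_filter -[RHS]big_filter.
apply/perm_big/uniq_perm; rewrite ?filter_uniq //.
by move=> b; rewrite !mem_filter andbC.
Qed.

Lemma count_le1 (T : eqType) (p : pred T) (l : seq T) : uniq l ->
  {in l &, forall x y, p x -> p y -> x = y} -> (count p l <= 1)%N.
Proof.
move=> ul p_eq; rewrite -size_filter; case E: (filter p l) => [//|x t]; rewrite -E.
have : x \in filter p l by rewrite E mem_head.
rewrite mem_filter => /andP[px xl].
apply: (@uniq_leq_size _ _ [:: x]); first exact: filter_uniq.
by move=> y; rewrite mem_filter mem_seq1 => /andP[py yl]; rewrite (p_eq y x).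
Qed.

Section SIFBlocks.
Variables (n : nat) (SS : {set {set 'I_n}}).
Hypothesis SS_SIF : SS \in SIF n.

Lemma SIF_card2 P : P \in SS -> #|P| = 2.
Proof. by move: SS_SIF; rewrite inE => /andP[/forallP/(_ P)/implyP + _] PS => /(_ PS)/eqP. Qed.

Lemma SIF_disjoint P Q : P \in SS -> Q \in SS -> P != Q -> [disjoint P & Q].
Proof.
move: SS_SIF; rewrite inE => /andP[_ /forallP/(_ P)/implyP + ] PS QS PQ.
by move=> /(_ PS)/forallP/(_ Q)/implyP/(_ QS)/implyP/(_ PQ).
Qed.

Lemma SIF_block_vals P : P \in SS -> [seq val x | x <- enum P] = [:: plo P; phi P].
Proof.
by move/SIF_card2; rewrite cardE /plo /phi; case: (enum P) => [|x [|y []]].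
Qed.

Lemma SIF_block_neq P : P \in SS -> plo P != phi P.
Proof.
move=> PS; have := map_inj_uniq val_inj (enum P); rewrite enum_uniq SIF_block_vals //.
by rewrite /= inE andbT.
Qed.

Lemma SIF_block_lt P : P \in SS -> (plo P < n)%N && (phi P < n)%N.
Proof.
move=> PS; have lt x : x \in [:: plo P; phi P] -> (x < n)%N.
  by rewrite -SIF_block_vals // => /mapP[y _ ->]; apply: ltn_ord.
by apply/andP; split; apply: lt; rewrite !inE eqxx ?orbT.
Qed.

Lemma mem_SIF_block P b :
  P \in SS -> (b \in [:: plo P; phi P]) = [exists x in P, val x == b].
Proof.
move=> PS; rewrite -SIF_block_vals //.
apply/mapP/existsP => [[x xP ->] | [x /andP[xP /eqP <-]]].
  by exists x; rewrite -mem_enum xP eqxx.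
by exists x; rewrite ?mem_enum.
Qed.

Lemma count_SIF_blocks b :
  count (fun P : {set 'I_n} => b \in [:: plo P; phi P]) (enum SS) = covered SS b.
Proof.
rewrite (eq_in_count (a2 := fun P : {set 'I_n} => [exists x in P, val x == b])); last first.
  by move=> P; rewrite mem_enum => /mem_SIF_block ->.
have le1 : (count (fun P : {set 'I_n} => [exists x in P, val x == b]) (enum SS) <= 1)%N.
  apply: count_le1 => [|P Q]; first exact: enum_uniq.
  rewrite !mem_enum => PS QS /existsP[x /andP[xP /eqP xb]] /existsP[y /andP[yQ /eqP yb]].
  apply/eqP; apply: contraLR isT => /(SIF_disjoint PS QS)/disjointFr/(_ xP).
  by rewrite (val_inj (etrans xb (esym yb))) yQ.
have has_covered : has (fun P : {set 'I_n} => [exists x in P, val x == b]) (enum SS) = covered SS b.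
  apply/hasP/existsP => [[P PS bP] | [P /andP[PS bP]]]; exists P => //.
    by rewrite -mem_enum PS.
  by rewrite mem_enum.
by move: le1; rewrite -has_covered has_count; case: (count _ _) => [|[|]].
Qed.

End SIFBlocks.

Lemma covered_lt n (SS : {set {set 'I_n}}) b : covered SS b -> (b < n)%N.
Proof. by case/existsP => P /andP[_ /existsP[x /andP[_ /eqP <-]]]; apply: ltn_ord. Qed.

(* [inl (k, l)] stands for the factor D_{kl} of omega, [inr j] for d_{I_j}. *)
Definition factor := ((nat * nat) + nat)%type.

Definition factor_supp (x : factor) : seq nat :=
  match x with inl kl => [:: kl.1; kl.2] | inr j => [:: j] end.

Definition factors n (SS : {set {set 'I_n}}) : seq factor :=
  [seq inl (plo P, phi P) | P <- enum SS] ++ [seq inr j | j <- iota 0 n & ~~ covered SS j].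

Lemma count_factors n (SS : {set {set 'I_n}}) b : SS \in SIF n ->
  count (fun x => b \in factor_supp x) (factors SS) = (b < n)%N.
Proof.
move=> SS_SIF; rewrite count_cat !count_map.
rewrite (eq_count (a2 := fun P : {set 'I_n} => b \in [:: plo P; phi P])) //.
rewrite count_SIF_blocks // (eq_count (a2 := pred1 b)); last by move=> j; rewrite /= inE eq_sym.
rewrite count_uniq_mem ?filter_uniq ?iota_uniq // mem_filter mem_iota.
by case cov: (covered SS b); rewrite ?(covered_lt cov).
Qed.

(* Classical equality and choice on terms, needed only to form the quotient by [ueq]. *)
HB.instance Definition _ := gen_eqMixin term.
HB.instance Definition _ := gen_choiceMixin term.

Section Enveloping.
Variables s r : letter.

Definition ueqb : rel term := fun a b => `[< ueq s r a b >].

Lemma ueqb_refl : reflexive ueqb.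
Proof. by move=> a; apply/asboolP/ueq_refl. Qed.

Lemma ueqb_sym : symmetric ueqb.
Proof. by move=> a b; apply/asboolP/asboolP => /ueq_sym. Qed.

Lemma ueqb_trans : transitive ueqb.
Proof. by move=> b a c /asboolP ab /asboolP bc; apply/asboolP/(ueq_trans ab bc). Qed.

Canonical ueqb_equiv := EquivRel ueqb ueqb_refl ueqb_sym ueqb_trans.

Definition Ug := {eq_quot ueqb}.
HB.instance Definition _ : EqQuotient _ ueqb Ug := EqQuotient.on Ug.
HB.instance Definition _ := Choice.on Ug.

Lemma pi_ueqP a b : reflect (\pi_Ug a = \pi_Ug b) `[< ueq s r a b >].
Proof. exact: eqmodP. Qed.

Lemma pi_ueq a b : ueq s r a b -> \pi_Ug a = \pi_Ug b.
Proof. by move/asboolP/pi_ueqP. Qed.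

Lemma ueq_pi a b : \pi_Ug a = \pi_Ug b -> ueq s r a b.
Proof. by move/pi_ueqP/asboolP. Qed.

Lemma ueq_repr a : ueq s r a (repr (\pi_Ug a)).
Proof. by apply: ueq_pi; rewrite reprK. Qed.

Definition scal := lift_embed Ug tc.
Canonical pi_scal_morph := PiEmbed scal.

Definition addU := lift_op2 Ug tadd.
Lemma pi_addU : {morph \pi : a b / tadd a b >-> addU a b}.
Proof. by move=> a b; unlock addU; apply/pi_ueq/ueq_add; apply: ueq_repr. Qed.
Canonical pi_addU_morph := PiMorph2 pi_addU.

Definition oppU := lift_op1 Ug tneg.
Lemma pi_oppU : {morph \pi : a / tneg a >-> oppU a}.
Proof. by move=> a; unlock oppU; apply/pi_ueq/ueq_mul; [apply: ueq_refl | apply: ueq_repr]. Qed.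
Canonical pi_oppU_morph := PiMorph1 pi_oppU.

Definition mulU := lift_op2 Ug tmul.
Lemma pi_mulU : {morph \pi : a b / tmul a b >-> mulU a b}.
Proof. by move=> a b; unlock mulU; apply/pi_ueq/ueq_mul; apply: ueq_repr. Qed.
Canonical pi_mulU_morph := PiMorph2 pi_mulU.

Ltac by_ueq := repeat (elim/quotW=> ?); rewrite !piE; apply: pi_ueq.

Lemma addUA : associative addU. Proof. by by_ueq; apply: ueq_addA. Qed.
Lemma addUC : commutative addU. Proof. by by_ueq; apply: ueq_addC. Qed.
Lemma add0U : left_id (scal 0) addU. Proof. by by_ueq; apply: ueq_add0. Qed.
Lemma addNU : left_inverse (scal 0) oppU addU.
Proof. by by_ueq; apply: ueq_trans (ueq_addC _ _ _ _) (ueq_addN _ _ _). Qed.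
Lemma mulUA : associative mulU. Proof. by by_ueq; apply: ueq_mulA. Qed.
Lemma mul1U : left_id (scal 1) mulU. Proof. by by_ueq; apply: ueq_mul1l. Qed.
Lemma mulU1 : right_id (scal 1) mulU. Proof. by by_ueq; apply: ueq_mul1r. Qed.
Lemma mulUDl : left_distributive mulU addU. Proof. by by_ueq; apply: ueq_mulDl. Qed.
Lemma mulUDr : right_distributive mulU addU. Proof. by by_ueq; apply: ueq_mulDr. Qed.

HB.instance Definition _ := GRing.isPzRing.Build Ug
  addUA addUC add0U addNU mulUA mul1U mulU1 mulUDl mulUDr.

Lemma pi_tadd a b : \pi_Ug (tadd a b) = \pi_Ug a + \pi_Ug b. Proof. exact: pi_addU. Qed.
Lemma pi_tmul a b : \pi_Ug (tmul a b) = \pi_Ug a * \pi_Ug b. Proof. exact: pi_mulU. Qed.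
Lemma pi_tc x : \pi_Ug (tc x) = scal x. Proof. by rewrite piE. Qed.

Lemma scalD : {morph scal : x y / x + y}.
Proof. by move=> x y; rewrite -!pi_tc -pi_tadd; apply/pi_ueq/ueq_sym/ueq_cadd. Qed.

Lemma scal_is_zmod_morphism : zmod_morphism scal.
Proof. by move=> x y; apply: (addIr (scal y)); rewrite -scalD !subrK. Qed.

Lemma scal_is_monoid_morphism : monoid_morphism scal.
Proof. by split=> // x y; rewrite -!pi_tc -pi_tmul; apply/pi_ueq/ueq_sym/ueq_cmul. Qed.

HB.instance Definition _ := GRing.isZmodMorphism.Build rat Ug scal scal_is_zmod_morphism.
HB.instance Definition _ := GRing.isMonoidMorphism.Build rat Ug scal scal_is_monoid_morphism.

Lemma scalM : {morph scal : x y / x * y}. Proof. exact: rmorphM. Qed.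
Lemma scalN : {morph scal : x / - x}. Proof. exact: rmorphN. Qed.
Lemma scal_nat n : scal n%:R = n%:R. Proof. exact: rmorph_nat. Qed.

Lemma scal_comm x q : GRing.comm (scal x) q.
Proof. by elim/quotW: q => a; rewrite /GRing.comm -pi_tc -!pi_tmul; apply/pi_ueq/ueq_ccomm. Qed.

Lemma pi_tneg a : \pi_Ug (tneg a) = - \pi_Ug a.
Proof. by rewrite pi_tmul pi_tc scalN mulN1r. Qed.

Lemma pi_tsub a b : \pi_Ug (tsub a b) = \pi_Ug a - \pi_Ug b.
Proof. by rewrite pi_tadd pi_tneg. Qed.

Lemma pi_tsum l : \pi_Ug (tsum l) = \sum_(a <- l) \pi_Ug a.
Proof. by elim: l => [|a l IH]; rewrite ?big_nil ?big_cons /= ?pi_tc ?rmorph0 // pi_tadd IH. Qed.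

Lemma pi_tprod l : \pi_Ug (tprod l) = \prod_(a <- l) \pi_Ug a.
Proof. by elim: l => [|a l IH]; rewrite ?big_nil ?big_cons /= ?pi_tc ?rmorph1 // pi_tmul IH. Qed.

End Enveloping.

Section Action.
Variables s r : letter.
Hypothesis rs : r != s.

Local Notation Ug := (Ug s r).
Local Notation "x %:U" := (scal s r x) (at level 2, format "x %:U").
Local Notation pd i := (\pi_Ug (Dp i)).
Local Notation dform p := (\pi_Ug (Fd p.1 p.2)).
Local Notation adX := (ad (\pi_Ug Xg)).

Lemma adX_scal x q : adX (x%:U * q) = x%:U * adX q.
Proof. by apply: ad_mulr_comm; apply/esym/scal_comm. Qed.

Lemma adX_D i : adX (pd i) = (- kd i s)%:U * pd r.
Proof. by rewrite /ad -pi_tc -!pi_tmul -pi_tsub; apply/pi_ueq/ueq_rel/rel_XD. Qed.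

Lemma adX_F p : adX (dform p) = (kd r p.1)%:U * dform (s, p.2) + (kd r p.2)%:U * dform (p.1, s).
Proof.
by rewrite /ad -!pi_tc -!pi_tmul -pi_tadd -pi_tsub; apply/pi_ueq/ueq_rel/rel_XF.
Qed.

Lemma adX_F_once p : occurs_once r p -> adX (dform p) = dform (repl_letter s r p).
Proof.
case: p => a b; rewrite adX_F /occurs_once /repl_letter /kd /= ![r == _]eq_sym.
by case: (a =P r) => [->|_]; case: (b =P r) => [->|_] //= _;
  rewrite ?rmorph0 ?rmorph1 ?mul0r ?mul1r ?addr0 ?add0r.
Qed.

Lemma adX_F_free p : p.1 != r -> p.2 != r -> adX (dform p) = 0.
Proof.
rewrite adX_F /kd ![r == _]eq_sym => /negbTE -> /negbTE ->.
by rewrite rmorph0 !mul0r addr0.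
Qed.

Definition eps_pd (h : rat) (a b : lpair) : Ug :=
  (h * eps a.1 a.2 b.1 b.2)%:U * pd (tfifth a.1 a.2 b.1 b.2).

Lemma scal_pd_expand (c : rat) (y : letter) : c%:U * pd y = \sum_x (c * kd x y)%:U * pd x.
Proof.
rewrite (bigD1 y) //= /kd eqxx mulr1 big1 ?addr0 // => x /negbTE ->.
by rewrite mulr0 mul0r.
Qed.

Lemma adX_eps_pd h a b : adX (eps_pd h a b) =
  (occurs_once r a)%:R * eps_pd h (repl_letter s r a) b +
  (occurs_once r b)%:R * eps_pd h a (repl_letter s r b).
Proof.
rewrite /eps_pd adM ad_comm ?mul0r ?add0r; last exact/esym/scal_comm.
rewrite adX_D !mulrA -!scal_nat -!scalM.
rewrite [LHS]scal_pd_expand [X in X + _]scal_pd_expand [X in _ + X]scal_pd_expand -big_split /=.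
apply: eq_bigr => x _; rewrite -mulrDl -scalD; congr (_%:U * _).
rewrite (kdC (tfifth _ _ _ _) s).
transitivity (h * (kd x r * - (kd s (tfifth a.1 a.2 b.1 b.2) * eps a.1 a.2 b.1 b.2))).
  by ring.
have /= -> := eps_shift a b x rs.
have shuffle (u v k e : rat) : u * (v * (k * e)) = v * (u * e) * k by ring.
by rewrite mulrDr; congr (_ + _); apply: shuffle.
Qed.

Definition factor_val (J : seq lpair) (x : factor) : Ug :=
  match x with
  | inl kl => \pi_Ug (Dpair J kl.1 kl.2)
  | inr j => \pi_Ug (Fd (nth p0 J j).1 (nth p0 J j).2)
  end.

Lemma pi_omega J : \pi_Ug (omega J) =
  \sum_(SS <- enum (SIF (size J))) ((-1) ^+ ncross SS)%:U * \prod_(x <- factors SS) factor_val J x.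
Proof.
rewrite pi_tsum big_map; apply: eq_bigr => SS _.
by rewrite !pi_tmul pi_tc /dword !pi_tprod big_cat !big_map.
Qed.

Lemma pi_Dpair J k l : \pi_Ug (Dpair J k l) =
  eps_pd (1 / 2 * (-1) ^+ (k + l)) (nth p0 J k) (nth p0 J l).
Proof. by rewrite pi_tmul pi_tc. Qed.

Variables (I : seq lpair) (c : nat).
Hypothesis cI : (c <= size I)%N.
Hypothesis I_once : forall b, (b < c)%N -> occurs_once r (nth p0 I b).
Hypothesis I_free : forall b, (c <= b < size I)%N -> ((nth p0 I b).1 != r) && ((nth p0 I b).2 != r).

Local Notation Ib b := (Ibsr I b s r).

Lemma occurs_once_nth k : (k < size I)%N -> occurs_once r (nth p0 I k) = (k < c)%N.
Proof.
move=> kI; case: (ltnP k c) => kc; first exact: I_once.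
have /andP[/negbTE k1 /negbTE k2] := I_free (introT andP (conj kc kI)).
by rewrite /occurs_once k1 k2.
Qed.

Lemma nth_Ibsr_same b : nth p0 (Ib b) b = repl_letter s r (nth p0 I b).
Proof. by rewrite nth_set_nth /= eqxx. Qed.

Lemma nth_Ibsr_other b j : j != b -> nth p0 (Ib b) j = nth p0 I j.
Proof. by rewrite nth_set_nth /= => /negbTE ->. Qed.

Lemma size_Ibsr b : (b < size I)%N -> size (Ib b) = size I.
Proof. by rewrite size_set_nth => /maxn_idPr. Qed.

Lemma factor_val_Ibsr_out x b : b \notin factor_supp x -> factor_val (Ib b) x = factor_val I x.
Proof.
case: x => [[k l] | j] /=; last by rewrite inE eq_sym => /nth_Ibsr_other ->.
rewrite !inE negb_or ![b == _]eq_sym => /andP[/nth_Ibsr_other kb /nth_Ibsr_other lb].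
by rewrite /Dpair kb lb.
Qed.

Lemma adX_factor (SS : {set {set 'I_(size I)}}) x : SS \in SIF (size I) -> x \in factors SS ->
  adX (factor_val I x) = \sum_(b <- iota 0 c | b \in factor_supp x) factor_val (Ib b) x.
Proof.
move=> SS_SIF; rewrite mem_cat => /orP[/mapP[P PS ->] | /mapP[j jS ->]] /=.
  rewrite mem_enum in PS; have kl := SIF_block_neq SS_SIF PS.
  have /andP[k_lt l_lt] := SIF_block_lt SS_SIF PS.
  have kl_uniq : uniq [:: plo P; phi P] by rewrite /= inE kl.
  rewrite big_mem_swap ?iota_uniq // !big_cons big_nil !mem_iota !add0n /=.
  rewrite !pi_Dpair adX_eps_pd // !nth_Ibsr_same (nth_Ibsr_other kl).
  rewrite eq_sym in kl; rewrite (nth_Ibsr_other kl) !occurs_once_nth //.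
  by case: (plo P < c)%N; case: (phi P < c)%N; rewrite ?mul1r ?mul0r ?addr0 ?add0r.
rewrite mem_filter mem_iota /= in jS; have jI : (j < size I)%N by case/andP: jS.
rewrite big_mem_swap ?iota_uniq // big_cons big_nil mem_iota /=; case: ltnP => jc.
  by rewrite addr0 nth_Ibsr_same; apply: adX_F_once; rewrite occurs_once_nth.
by have /andP[j1 j2] := I_free (introT andP (conj jc jI)); apply: adX_F_free.
Qed.

Lemma adX_prod_factors (SS : {set {set 'I_(size I)}}) : SS \in SIF (size I) ->
  adX (\prod_(x <- factors SS) factor_val I x) =
  \sum_(b <- iota 0 c) \prod_(x <- factors SS) factor_val (Ib b) x.
Proof.
move=> SS_SIF; rewrite (@der_prod_disjoint _ _ (adM _) _ _ (factor_val I)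
  (fun b => factor_val (Ib b)) factor_supp (iota 0 c)).
- rewrite big_seq_cond [RHS]big_seq_cond; apply: eq_bigl => b.
  rewrite has_count count_factors // lt0b andbT mem_iota add0n.
  by apply/andb_idr => /andP[_ bc]; apply: leq_trans bc cI.
- by move=> b; rewrite count_factors // leq_b1.
- by move=> x; apply: adX_factor.
- by move=> x _ b; apply: factor_val_Ibsr_out.
Qed.

Lemma adX_omega : adX (\pi_Ug (omega I)) = \sum_(b <- iota 0 c) \pi_Ug (omega (Ib b)).
Proof.
rewrite pi_omega ad_sum.
transitivity (\sum_(b <- iota 0 c) \sum_(SS <- enum (SIF (size I)))
    ((-1) ^+ ncross SS)%:U * \prod_(x <- factors SS) factor_val (Ib b) x).
  rewrite exchange_big; apply: eq_big_seq => SS; rewrite mem_enum => SS_SIF.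
  by rewrite adX_scal adX_prod_factors // mulr_sumr.
apply: eq_big_seq => b; rewrite mem_iota => /andP[_ bc].
by rewrite pi_omega size_Ibsr // (leq_trans bc cI).
Qed.

End Action.

Local Close Scope ring_scope.

Theorem theorem5p8 (I : seq lpair) (c : nat) (r s : letter) :
  r != s ->
  c <= size I ->
  (forall b, b < c -> ((nth p0 I b).1 == r) (+) ((nth p0 I b).2 == r)) ->
  (forall b, c <= b < size I -> ((nth p0 I b).1 != r) && ((nth p0 I b).2 != r)) ->
  ueq s r (tsub (tmul Xg (omega I)) (tmul (omega I) Xg))
          (tsum [seq omega (Ibsr I b s r) | b <- iota 0 c]).
Proof.
move=> rs cI I_once I_free; apply: ueq_pi.
by rewrite pi_tsub !pi_tmul pi_tsum big_map; apply: adX_omega.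
Qed.
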